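(* For every $n\geq 2$, $B_d^t(F_n)=1$.
   Context: A total dominator coloring (TD-coloring) of a graph $G$ with no isolated vertex is a proper vertex coloring of $G$ in which every vertex is adjacent to every vertex of some color class. The total dominator chromatic number $\chi_d^t(G)$ is the minimum number of colors in a TD-coloring of $G$. The TDC-bondage number $B_d^t(G)$ is the minimum number of edges of $G$ whose removal changes the total dominator chromatic number of $G$. The friendship graph $F_n$ ($n\ge2$) is obtained by joining $n$ copies of the cycle $C_3$ at a common vertex. *)

(* Simple graphs on a finType T given by a symmetric,
   irreflexive boolean adjacency relation e : rel T. *)
From mathcomp Require Import all_boot.
Set Implicit Arguments. Unset Strict Implicit. Unset Printing Implicit Defensive.

Section Graphs.
Variable T : finType.

Definition edges (e : rel T) : {set {set T}} :=
  [set [set x; y] | x in T, y in T & e x y].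

Definition remove_edges (e : rel T) (S : {set {set T}}) : rel T :=
  fun x y => e x y && ([set x; y] \notin S).

Definition no_isolated (e : rel T) : Prop := forall v : T, exists u : T, e v u.

(* TD-coloring with (at most) k colors: proper, and every vertex is adjacent
   to every vertex of some (nonempty) color class. *)
Definition TD_coloring (e : rel T) (k : nat) (c : T -> 'I_k) : Prop :=
  (forall x y, e x y -> c x <> c y) /\
  (forall v, exists i : 'I_k, (exists u, c u = i) /\ (forall u, c u = i -> e v u)).

Definition is_TDC_number (e : rel T) (k : nat) : Prop :=
  (exists c : T -> 'I_k, TD_coloring e c) /\
  (forall k' (c : T -> 'I_k'), TD_coloring e c -> k <= k').

(* removing the edge set S (yielding a graph without isolated vertices,
   where chi_d^t is defined) changes chi_d^t *)
Definition changes_TDC (e : rel T) (S : {set {set T}}) : Prop :=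
  no_isolated (remove_edges e S) /\
  forall k, is_TDC_number e k -> ~ is_TDC_number (remove_edges e S) k.

Definition is_TDC_bondage (e : rel T) (b : nat) : Prop :=
  (exists S : {set {set T}}, S \subset edges e /\ #|S| = b /\ changes_TDC e S) /\
  (forall S : {set {set T}}, S \subset edges e -> changes_TDC e S -> b <= #|S|).
End Graphs.

(* Friendship graph F_n: center None, triangle i has outer vertices
   Some (i,false), Some (i,true). *)
Definition friendship_adj (n : nat) : rel (option ('I_n * bool)) :=
  fun x y => match x, y with
  | None, None => false
  | None, Some _ | Some _, None => true
  | Some (i, a), Some (j, b) => (i == j) && (a != b)
  end.
Arguments friendship_adj n : clear implicits.

From mathcomp Require Import all_boot.

Set Implicit Arguments. Unset Strict Implicit. Unset Printing Implicit Defensive.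

(* chi_d^t(F_n) = 3: colour the centre 0 and the two outer vertices of every
   triangle 1 and 2; every vertex then dominates the colour class of the centre
   or of colour 1, and a triangle needs three colours.  Deleting a spoke
   {centre, x} leaves x with its triangle partner y as only neighbour, so in a
   TD-coloring y must form a colour class on its own; together with the three
   colours of another triangle this forces a fourth colour.  Hence one edge
   suffices, and removing no edge changes nothing. *)

Lemma uniq_ord_size k (s : seq 'I_k) : uniq s -> size s <= k.
Proof. by move/card_uniqP <-; rewrite -[k in _ <= k]card_ord max_card. Qed.

Lemma TD_coloring_eq2 (T : finType) (e e' : rel T) k (c : T -> 'I_k) :
  e =2 e' -> TD_coloring e c -> TD_coloring e' c.
Proof.
move=> ee' [proper dom]; split=> [x y|v]; first by rewrite -ee'; apply: proper.
have [i [nonempty sub]] := dom v; exists i; split=> // u /sub.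
by rewrite ee'.
Qed.

Section TotalDominatorColorings.

Variables (T : finType) (e : rel T).

Lemma remove_edges0 : remove_edges e set0 =2 e.
Proof. by move=> x y; rewrite /remove_edges in_set0 andbT. Qed.

Lemma is_TDC_number_remove_edges0 k :
  is_TDC_number e k -> is_TDC_number (remove_edges e set0) k.
Proof.
case=> [[c col] min]; split.
  by exists c; apply: TD_coloring_eq2 col => x y; rewrite remove_edges0.
by move=> k' c' /(TD_coloring_eq2 remove_edges0); apply: min.
Qed.

Lemma not_changes_TDC0 k : is_TDC_number e k -> ~ changes_TDC e set0.
Proof. by move=> ek [_ /(_ k ek)]; apply; apply: is_TDC_number_remove_edges0. Qed.

(* A vertex only dominates colour classes inside its neighbourhood. *)
Lemma TD_coloring_sole_neighbor k (c : T -> 'I_k) v w :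
  TD_coloring e c -> (forall u, e v u -> u = w) -> forall u, c u = c w -> u = w.
Proof.
move=> [_ dom] sole; have [i [[u0 cu0] sub]] := dom v.
have u0w : u0 = w by apply/sole/sub.
by move=> u cu; apply/sole/sub; rewrite cu -u0w.
Qed.

Lemma remove_edge_other a b x y :
  (a \notin [set x; y]) || (b \notin [set x; y]) ->
  remove_edges e [set [set a; b]] x y = e x y.
Proof.
move=> out; rewrite /remove_edges in_set1; case: eqP; rewrite ?andbT // => xyab.
by move: out; rewrite xyab !inE !eqxx orbT.
Qed.

Lemma remove_edge_removed a b : remove_edges e [set [set a; b]] b a = false.
Proof. by rewrite /remove_edges setUC set11 andbF. Qed.

End TotalDominatorColorings.

Section Friendship.

Variable n : nat.

Local Notation V := (option ('I_n * bool)).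
Local Notation F := (friendship_adj n).

Definition friendship_coloring (x : V) : 'I_3 :=
  match x with
  | None => @Ordinal 3 0 isT
  | Some (_, false) => @Ordinal 3 1 isT
  | Some (_, true) => @Ordinal 3 2 isT
  end.

Lemma friendship_coloring_TD (i : 'I_n) : TD_coloring F friendship_coloring.
Proof.
split.
  by move=> [[? [|]]|] [[? [|]]|] //=; rewrite andbF.
case=> [[j b]|].
  by exists (@Ordinal 3 0 isT); split; [exists None | case=> [[? [|]]|]].
exists (@Ordinal 3 1 isT); split; first by exists (Some (i, false)).
by case=> [[? [|]]|].
Qed.

Lemma friendship_TD_ge3 (i : 'I_n) k (c : V -> 'I_k) : TD_coloring F c -> 3 <= k.
Proof.
move=> [proper _].
apply: (@uniq_ord_size _ [:: c None; c (Some (i, false)); c (Some (i, true))]).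
by rewrite /= !inE !negb_or; do !(apply/andP; split) => //; apply/eqP/proper;
  rewrite /= ?eqxx.
Qed.

Lemma friendship_TDC (i : 'I_n) : is_TDC_number F 3.
Proof.
split; first by exists friendship_coloring; apply: (friendship_coloring_TD i).
by move=> k c; apply: (friendship_TD_ge3 i).
Qed.

Definition spoke (i : 'I_n) : {set {set V}} := [set [set None; Some (i, false)]].

Lemma spoke_sub_edges i : spoke i \subset edges F.
Proof. by rewrite sub1set; apply/imset2P; exists None (Some (i, false)); rewrite ?inE. Qed.

Lemma remove_spoke_no_isolated i : no_isolated (remove_edges F (spoke i)).
Proof.
case=> [[j b]|].
  by exists (Some (j, ~~ b)); rewrite remove_edge_other ?inE //= eqxx; case: b.
by exists (Some (i, true)); rewrite remove_edge_other // !inE /=; apply/eqP=> -[].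
Qed.

Lemma remove_spoke_TD_ge4 (i j : 'I_n) k (c : V -> 'I_k) :
  i != j -> TD_coloring (remove_edges F (spoke i)) c -> 4 <= k.
Proof.
move=> ij col; have [proper _] := col.
set y := Some (i, true).
have sole u : remove_edges F (spoke i) (Some (i, false)) u -> u = y.
  case: u => [[i' [|]]|]; rewrite ?remove_edge_removed // /remove_edges /=.
  - by rewrite andbT => /andP[/eqP <-].
  - by rewrite andbF.
have class_y u : u != y -> c u != c y.
  by apply: contraNneq => /(TD_coloring_sole_neighbor col sole) ->.
have ij_out b b' : (Some (i, b) == Some (j, b') :> V) = false.
  by apply/negbTE; apply: contraNneq ij => -[->].
apply: (@uniq_ord_size _ [:: c y; c None; c (Some (j, false)); c (Some (j, true))]).
rewrite /= !inE !negb_or; do !(apply/andP; split);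
  rewrite 1?eq_sym ?class_y ?(eq_sym _ y) ?ij_out //; apply/eqP/proper;
  by rewrite remove_edge_other ?inE ?ij_out //= eqxx.
Qed.

Lemma remove_spoke_changes_TDC (i j : 'I_n) : i != j -> changes_TDC F (spoke i).
Proof.
move=> ij; split; first exact: remove_spoke_no_isolated.
move=> k [_ /(_ 3 _ (friendship_coloring_TD i)) k_le3] [[c col] _].
by have := remove_spoke_TD_ge4 ij col; rewrite leqNgt ltnS k_le3.
Qed.

End Friendship.

Theorem mainTheorem14 (n : nat) (hn : 2 <= n) :
  is_TDC_bondage (friendship_adj n) 1.
Proof.
pose i0 : 'I_n := Ordinal (ltnW hn); pose i1 : 'I_n := Ordinal hn.
split.
  exists (spoke i0); rewrite spoke_sub_edges cards1; do 2!split=> //.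
  exact: (@remove_spoke_changes_TDC _ i0 i1).
move=> S _ changes; rewrite lt0n; apply: contraPneq changes => /cards0_eq ->.
exact/not_changes_TDC0/(friendship_TDC i0).
Qed.
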